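(* Let $\lambda_1,\lambda_2\ge0$ with $\lambda_1+\lambda_2(p-1)>0$, and let $w_i=\lambda_1+\lambda_2(p-i)$ for $i=1,\dots,p$. Let $\mathbf A\in\mathbb R^{n\times p}$ with columns $\mathbf a_1,\dots,\mathbf a_p$, let $\mathbf y\in\mathbb R^n$, and let $\widehat{\mathbf x}$ be any minimizer of $\|\mathbf A\mathbf x-\mathbf y\|_1+\sum_{i=1}^p w_i|x|_{[i]}$ over $\mathbf x\in\mathbb R^p$. Then for every pair $(i,j)$ with $\|\operatorname{sign}(\widehat x_i)\mathbf a_i-\operatorname{sign}(\widehat x_j)\mathbf a_j\|_1<\lambda_2$ we have $|\widehat x_i|=|\widehat x_j|$. Moreover, if the columns satisfy $\mathbf 1^T\mathbf a_k=0$ and $\|\mathbf a_k\|_2=1$ for all $k$, and $\rho_{ij}=\mathbf a_i^T\mathbf a_j$, then for every pair $(i,j)$ with $\sqrt{n(2-2\rho_{ij}\operatorname{sign}(\widehat x_i\widehat x_j))}<\lambda_2$ we have $|\widehat x_i|=|\widehat x_j|$.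
   Context: $|x|_{[i]}$ denotes the $i$-th largest component of $\mathbf x$ in magnitude; $\mathbf 1$ is the all-ones vector; $\operatorname{sign}$ denotes the sign function. *)

From HB Require Import structures.
From mathcomp Require Import all_boot all_order all_algebra.
Set Implicit Arguments. Unset Strict Implicit. Unset Printing Implicit Defensive.
Import Order.TTheory GRing.Theory Num.Theory.
Local Open Scope ring_scope.

(* The magnitudes |x_k| sorted in non-increasing order:
   nth 0 (sorted_abs x) i = |x|_[i+1] (0-indexed i). *)
Definition sorted_abs (R : realDomainType) (p : nat) (x : 'cV[R]_p) : seq R :=
  sort (fun a b : R => b <= a) [seq `|x k 0| | k <- enum 'I_p].

Definition oscar_w (R : realDomainType) (p : nat) (l1 l2 : R) (i : 'I_p) : R :=
  l1 + l2 * (p%:R - (i.+1)%:R).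

Definition l1_oscar_obj (R : realDomainType) (n p : nat) (l1 l2 : R)
    (A : 'M[R]_(n, p)) (y : 'cV[R]_n) (x : 'cV[R]_p) : R :=
  \sum_(r < n) `|(A *m x - y) r 0|
  + \sum_(i < p) oscar_w l1 l2 i * nth 0 (sorted_abs x) i.

(* The OSCAR penalty [sum_i w_i |x|_[i]] equals
   [l1 sum_k |x_k| + l2 sum_(k<l) max(|x_k|, |x_l|)].  Suppose [|xh_i| > |xh_j|]
   and move mass [d = (|xh_i| - |xh_j|) / 2] from the larger coordinate to the
   smaller one, along the signs of [xh_i] and [xh_j].  The pairwise maxima only
   drop (the pair (i, j) itself by [d]), so the penalty decreases by at least
   [l2 d], while the l1 residual grows by at most
   [d ||sign(xh_i) a_i - sign(xh_j) a_j||_1 < d l2], contradicting minimality.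
   The second statement follows from [||v||_1 <= sqrt(n) ||v||_2] and, for unit columns,
   [||sign(xh_i) a_i - sign(xh_j) a_j||_2^2 <= 2 - 2 rho_ij sign(xh_i xh_j)]. *)

From HB Require Import structures.
From mathcomp Require Import all_boot all_order all_algebra.
From mathcomp Require Import ring lra.
Set Implicit Arguments. Unset Strict Implicit. Unset Printing Implicit Defensive.
Import Order.TTheory GRing.Theory Num.Theory.
Local Open Scope ring_scope.

Section PairMax.
Variable R : realDomainType.

Definition pairmax_sum (s : seq R) := \sum_(a <- s) \sum_(b <- s) Num.max a b.

Lemma pairmax_sum_sorted (s : seq R) : sorted (fun a b : R => b <= a) s ->
  2 * \sum_(i < size s) ((size s)%:R - (i.+1)%:R) * nth 0 s i =
  pairmax_sum s - \sum_(a <- s) a.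
Proof.
elim: s => [|a t IH] /= s_sorted.
  by rewrite /pairmax_sum !big_nil big_ord0 mulr0 subr0.
have t_le_a : all (fun b => b <= a) t.
  by apply: (order_path_min _ s_sorted) => x y z /= yx zy; exact: le_trans zy yx.
have sum_max_a : \sum_(b <- t) Num.max a b = a *+ size t.
  rewrite (eq_big_seq (fun _ => a)) ?big_const_seq ?count_predT ?iter_addr_0 //.
  by move=> b /(allP t_le_a) ba; rewrite max_l.
rewrite big_ord_recl /= [(size t).+1%:R]mulrSr addrK.
under eq_bigr => i _ do
  rewrite /bump add1n add0n [(i.+2)%:R]mulrSr opprD addrACA subrr addr0.
rewrite mulrDr (IH (path_sorted s_sorted)) /pairmax_sum !big_cons maxxx.
under [X in _ = _ + X - _]eq_bigr => b _ do rewrite big_cons.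
under [X in _ = _ + X - _]eq_bigr => b _ do rewrite maxC.
by rewrite big_split /= sum_max_a -mulr_natl; ring.
Qed.
End PairMax.

Lemma max_transfer_le (R : realDomainType) (a b c d : R) : 0 <= d -> b + d <= a - d ->
  Num.max (a - d) c + Num.max (b + d) c <= Num.max a c + Num.max b c.
Proof. by move=> d_ge0 ba; rewrite !maxElt; do 4 case: ltP => ?; lra. Qed.

Section Penalty.
Variables (R : realDomainType) (p : nat).
Implicit Types (u v : 'I_p -> R).

Lemma sum_split2 (f : 'I_p -> R) (i j : 'I_p) : i != j ->
  \sum_k f k = f i + f j + \sum_(k | (k != i) && (k != j)) f k.
Proof. by move=> neq_ij; rewrite (bigD1 i) //= (bigD1 j) 1?eq_sym //= addrA. Qed.

Lemma sum_offdiag_maxE v :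
  \sum_k \sum_(l | l != k) Num.max (v k) (v l)
    = \sum_k \sum_l Num.max (v k) (v l) - \sum_k v k.
Proof.
rewrite -sumrB; apply: eq_bigr => k _.
by rewrite [X in _ = X - _](bigD1 k) //= maxxx addrC addrK.
Qed.

(* Twice the OSCAR penalty [l1 sum_k v_k + l2 sum_(k<l) max(v_k, v_l)] of the
   magnitudes [v]; the factor 2 turns the sum over k < l into one over k <> l. *)
Definition oscar_penalty2 (l1 l2 : R) v :=
  2 * l1 * \sum_k v k + l2 * \sum_k \sum_(l | l != k) Num.max (v k) (v l).

Lemma oscar_penalty2E (l1 l2 : R) (x : 'cV[R]_p) :
  2 * \sum_(i < p) oscar_w l1 l2 i * nth 0 (sorted_abs x) i =
  oscar_penalty2 l1 l2 (fun k => `|x k 0|).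
Proof.
have size_s : size (sorted_abs x) = p.
  by rewrite size_sort size_map size_enum_ord.
have sorted_s : sorted (fun a b : R => b <= a) (sorted_abs x).
  by apply: sort_sorted => a b; rewrite le_total.
have perm_s : perm_eq (sorted_abs x) [seq `|x k 0| | k <- enum 'I_p].
  by rewrite perm_sort.
have sum_s (F : R -> R) : \sum_(a <- sorted_abs x) F a = \sum_k F `|x k 0|.
  by rewrite (perm_big _ perm_s) big_map big_enum.
have sum_nth : \sum_(i < p) nth 0 (sorted_abs x) i = \sum_(a <- sorted_abs x) a.
  by rewrite (big_nth 0) big_mkord size_s.
have := pairmax_sum_sorted sorted_s; rewrite size_s => rank_sum.
rewrite /oscar_penalty2 /oscar_w.
under eq_bigr => i _ do rewrite mulrDl -mulrA.
rewrite big_split -mulr_sumr -mulr_sumr /= mulrDr [2 * (l2 * _)]mulrCA rank_sum.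
rewrite sum_nth mulrA sum_offdiag_maxE /pairmax_sum sum_s.
rewrite (sum_s (fun a => \sum_(b <- sorted_abs x) Num.max a b)).
by congr (_ + _ * (_ - _)); apply: eq_bigr => k _; rewrite sum_s.
Qed.

Lemma oscar_penalty2_homo (l1 l2 : R) u v : 0 <= l1 -> 0 <= l2 ->
  (forall k, u k <= v k) -> oscar_penalty2 l1 l2 u <= oscar_penalty2 l1 l2 v.
Proof.
move=> l1_ge0 l2_ge0 le_uv; rewrite lerD // ler_wpM2l ?mulr_ge0 ?ler_sum //.
by move=> k _; apply: ler_sum => l _; rewrite le_max2.
Qed.

Section Transfer.
Variables (i j : 'I_p) (neq_ij : i != j).

Lemma sum_pairs_split2 (f : 'I_p -> 'I_p -> R) :
  \sum_k \sum_l f k l =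
    f i i + f i j + f j i + f j j
    + \sum_(k | (k != i) && (k != j)) (f i k + f k i + f j k + f k j)
    + \sum_(k | (k != i) && (k != j)) \sum_(l | (l != i) && (l != j)) f k l.
Proof.
under eq_bigr => k _ do rewrite (sum_split2 (f k) neq_ij).
rewrite (sum_split2 _ neq_ij) /= !big_split /=; ring.
Qed.

Definition transfer v (d : R) k :=
  if k == i then v i - d else if k == j then v j + d else v k.

Lemma transfer_i v d : transfer v d i = v i - d.
Proof. by rewrite /transfer eqxx. Qed.

Lemma transfer_j v d : transfer v d j = v j + d.
Proof. by rewrite /transfer eq_sym (negPf neq_ij) eqxx. Qed.

Lemma transfer_other v d k : k != i -> k != j -> transfer v d k = v k.
Proof. by rewrite /transfer => /negPf-> /negPf->. Qed.

Lemma sum_transfer v d : \sum_k transfer v d k = \sum_k v k.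
Proof.
rewrite !(sum_split2 _ neq_ij) transfer_i transfer_j.
rewrite (eq_bigr v) => [|k /andP[ki kj]]; last exact: transfer_other.
by rewrite addrACA addNr addr0.
Qed.

Lemma sum_pairmax_transfer v d : 0 <= d -> v j + d <= v i - d ->
  \sum_k \sum_l Num.max (transfer v d k) (transfer v d l)
    <= \sum_k \sum_l Num.max (v k) (v l) - 2 * d.
Proof.
move=> d_ge0 le_ji; rewrite !sum_pairs_split2.
have cross : \sum_(k | (k != i) && (k != j))
      (Num.max (transfer v d i) (transfer v d k)
       + Num.max (transfer v d k) (transfer v d i)
       + Num.max (transfer v d j) (transfer v d k)
       + Num.max (transfer v d k) (transfer v d j))
  <= \sum_(k | (k != i) && (k != j))
      (Num.max (v i) (v k) + Num.max (v k) (v i)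
       + Num.max (v j) (v k) + Num.max (v k) (v j)).
  apply: ler_sum => k /andP[ki kj]; rewrite transfer_i transfer_j transfer_other //.
  rewrite ![Num.max (v k) _]maxC; have := max_transfer_le (v k) d_ge0 le_ji; lra.
have rest : \sum_(k | (k != i) && (k != j)) \sum_(l | (l != i) && (l != j))
    Num.max (transfer v d k) (transfer v d l)
  = \sum_(k | (k != i) && (k != j)) \sum_(l | (l != i) && (l != j)) Num.max (v k) (v l).
  apply: eq_bigr => k /andP[ki kj]; apply: eq_bigr => l /andP[li lj].
  by rewrite !transfer_other.
have le_vji : v j <= v i by lra.
rewrite rest transfer_i transfer_j in cross *.
rewrite !maxxx [Num.max (v j) _]maxC [Num.max (v j + d) _]maxC.
rewrite (max_l le_vji) (max_l le_ji).
lra.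
Qed.

Lemma oscar_penalty2_transfer (l1 l2 : R) u v d :
  0 <= l1 -> 0 <= l2 -> 0 <= d -> v j + d <= v i - d ->
  (forall k, u k <= transfer v d k) ->
  oscar_penalty2 l1 l2 u <= oscar_penalty2 l1 l2 v - 2 * l2 * d.
Proof.
move=> l1_ge0 l2_ge0 d_ge0 le_ji le_ut.
apply: le_trans (oscar_penalty2_homo l1_ge0 l2_ge0 le_ut) _.
rewrite /oscar_penalty2 !sum_offdiag_maxE sum_transfer.
have := ler_wpM2l l2_ge0 (sum_pairmax_transfer d_ge0 le_ji); lra.
Qed.

End Transfer.

End Penalty.

Lemma l1_residual_addr (R : realDomainType) (n p : nat) (A : 'M[R]_(n, p))
    (y : 'cV[R]_n) (x z : 'cV[R]_p) :
  \sum_r `|(A *m (x + z) - y) r 0|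
    <= \sum_r `|(A *m x - y) r 0| + \sum_r `|(A *m z) r 0|.
Proof.
rewrite -big_split ler_sum // => r _.
by rewrite mulmxDr addrAC [_ r 0]mxE ler_normD.
Qed.

Lemma normr_subr_sg (R : realDomainType) (a d : R) : 0 <= d <= `|a| ->
  `|a - Num.sg a * d| = `|a| - d.
Proof.
case/andP=> d_ge0 d_le; have [a0|a_neq0] := eqVneq a 0.
  have d0 : d = 0 by apply/le_anti/andP; rewrite d_ge0 -(normr0 R) -a0.
  by rewrite a0 d0 mulr0 !subr0.
by rewrite {1}[a]numEsg -mulrBr normrM normr_sg a_neq0 mul1r ger0_norm // subr_ge0.
Qed.

Lemma normr_addr_sg_le (R : realDomainType) (b d : R) : 0 <= d ->
  `|b + Num.sg b * d| <= `|b| + d.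
Proof.
move=> d_ge0; rewrite (le_trans (ler_normD _ _)) // lerD2l normrM (ger0_norm d_ge0).
by rewrite normr_sg; apply: ler_piMl => //; case: (b != 0).
Qed.

Lemma oscar_minimizer_abs_le (R : realFieldType) (n p : nat) (l1 l2 : R)
    (A : 'M[R]_(n, p)) (y : 'cV[R]_n) (xh : 'cV[R]_p) :
  0 <= l1 -> 0 <= l2 ->
  (forall x : 'cV[R]_p, l1_oscar_obj l1 l2 A y xh <= l1_oscar_obj l1 l2 A y x) ->
  forall i j : 'I_p,
    \sum_(r < n) `|Num.sg (xh i 0) * A r i - Num.sg (xh j 0) * A r j| < l2 ->
    `|xh i 0| <= `|xh j 0|.
Proof.
move=> l1_ge0 l2_ge0 xh_min i j; set S := \sum_(r < n) _ => S_lt.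
rewrite leNgt; apply/negP => lt_ji.
have neq_ij : i != j by apply: contraTneq lt_ji => ->; rewrite ltxx.
set v := fun k => `|xh k 0|; set si := Num.sg (xh i 0); set sj := Num.sg (xh j 0).
pose d := (v i - v j) / 2.
have d_gt0 : 0 < d by rewrite divr_gt0 // subr_gt0.
have vj_ge0 : 0 <= v j := normr_ge0 _.
have d2 : d * 2 = v i - v j by rewrite divfK // pnatr_eq0.
pose z : 'cV[R]_p := d *: (sj *: delta_mx j 0 - si *: delta_mx i 0).
have zE k : z k 0 = d * (sj * (k == j)%:R - si * (k == i)%:R).
  by rewrite !mxE !andbT.
have Az r : (A *m z) r 0 = d * (sj * A r j - si * A r i).
  by rewrite -scalemxAr mulmxBr -!scalemxAr -!colE !mxE.
have fit_le : \sum_r `|(A *m (xh + z) - y) r 0| <= \sum_r `|(A *m xh - y) r 0| + d * S.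
  apply: le_trans (l1_residual_addr A y xh z) _; rewrite lerD2l /S mulr_sumr.
  by apply: ler_sum => r _; rewrite Az normrM (gtr0_norm d_gt0) distrC.
have pen_le : oscar_penalty2 l1 l2 (fun k => `|(xh + z) k 0|)
    <= oscar_penalty2 l1 l2 v - 2 * l2 * d.
  apply: (oscar_penalty2_transfer neq_ij l1_ge0 l2_ge0 (ltW d_gt0)); first by lra.
  move=> k; rewrite /transfer mxE zE.
  have [->|ki] := eqVneq k i.
    rewrite (negPf neq_ij) mulr0 sub0r mulr1 mulrN [d * _]mulrC normr_subr_sg //.
    by rewrite (ltW d_gt0); change (d <= v i); lra.
  have [->|kj] := eqVneq k j.
    by rewrite mulr0 subr0 mulr1 mulrC normr_addr_sg_le // ltW.
  by rewrite !mulr0 subr0 mulr0 addr0.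
have := xh_min (xh + z); rewrite /l1_oscar_obj.
have := oscar_penalty2E l1 l2 (xh + z); have := oscar_penalty2E l1 l2 xh.
have : d * S < d * l2 by rewrite ltr_pM2l.
rewrite -/v; lra.
Qed.

Lemma sqr_sum_le_mul_sum_sqr (R : realDomainType) (n : nat) (a : 'I_n -> R) :
  (\sum_r a r) ^+ 2 <= n%:R * \sum_r a r ^+ 2.
Proof.
have sum_sqrB r : \sum_s (a r - a s) ^+ 2
    = a r ^+ 2 *+ n - (a r * \sum_s a s) *+ 2 + \sum_s a s ^+ 2.
  under eq_bigr => s _ do rewrite sqrrB.
  by rewrite big_split sumrB sumr_const card_ord sumrMnl -mulr_sumr.
have : 0 <= \sum_r \sum_s (a r - a s) ^+ 2.
  by apply: sumr_ge0 => r _; apply: sumr_ge0 => s _; exact: sqr_ge0.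
under eq_bigr => r _ do rewrite sum_sqrB.
rewrite big_split sumrB sumr_const card_ord !sumrMnl -mulr_suml -expr2.
by rewrite /= -[(\sum_s _) *+ n]mulr_natl; lra.
Qed.

Lemma sum_norm_le_sqrt (R : rcfType) (n : nat) (v : 'I_n -> R) :
  \sum_r `|v r| <= Num.sqrt (n%:R * \sum_r v r ^+ 2).
Proof.
have sum_ge0 : 0 <= \sum_r `|v r| by apply: sumr_ge0 => r _.
rewrite -(ger0_norm sum_ge0) -sqrtr_sqr ler_sqrt; last first.
  by rewrite mulr_ge0 // sumr_ge0 // => r _; exact: sqr_ge0.
under [X in _ <= _ * X]eq_bigr => r _ do rewrite -real_normK ?num_real //.
exact: sqr_sum_le_mul_sum_sqr.
Qed.

Lemma sum_sqr_signed_diff_le (R : realDomainType) (n : nat) (a b : 'I_n -> R)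
    (s t : R) :
  \sum_r a r ^+ 2 = 1 -> \sum_r b r ^+ 2 = 1 ->
  \sum_r (Num.sg s * a r - Num.sg t * b r) ^+ 2
    <= 2 - 2 * (\sum_r a r * b r) * Num.sg (s * t).
Proof.
move=> a_unit b_unit.
have -> : \sum_r (Num.sg s * a r - Num.sg t * b r) ^+ 2 =
    Num.sg s ^+ 2 * \sum_r a r ^+ 2 + Num.sg t ^+ 2 * \sum_r b r ^+ 2
    - 2 * (\sum_r a r * b r) * Num.sg (s * t).
  rewrite sgrM !mulr_sumr mulr_suml -big_split -sumrB.
  by apply: eq_bigr => r _ /=; ring.
have sg_sqr_le1 (u : R) : Num.sg u ^+ 2 <= 1 by rewrite sqr_sg; case: (u != 0).
rewrite a_unit b_unit !mulr1 lerD2r -[2 : R]/(1 + 1).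
exact: lerD.
Qed.

Theorem corollary4 (R : rcfType) (n p : nat) (l1 l2 : R)
    (A : 'M[R]_(n, p)) (y : 'cV[R]_n) (xh : 'cV[R]_p) :
  0 <= l1 -> 0 <= l2 -> 0 < l1 + l2 * (p%:R - 1) ->
  (forall x : 'cV[R]_p, l1_oscar_obj l1 l2 A y xh <= l1_oscar_obj l1 l2 A y x) ->
  (forall i j : 'I_p,
     \sum_(r < n) `|Num.sg (xh i 0) * A r i - Num.sg (xh j 0) * A r j| < l2 ->
     `|xh i 0| = `|xh j 0|) /\
  ((forall k : 'I_p, \sum_(r < n) A r k = 0) ->
   (forall k : 'I_p, Num.sqrt (\sum_(r < n) A r k ^+ 2) = 1) ->
   forall i j : 'I_p,
     Num.sqrt (n%:R * (2 - 2 * (\sum_(r < n) A r i * A r j)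
                           * Num.sg (xh i 0 * xh j 0))) < l2 ->
     `|xh i 0| = `|xh j 0|).
Proof.
move=> l1_ge0 l2_ge0 _ xh_min.
have abs_le := oscar_minimizer_abs_le l1_ge0 l2_ge0 xh_min.
have grouping i j :
    \sum_(r < n) `|Num.sg (xh i 0) * A r i - Num.sg (xh j 0) * A r j| < l2 ->
    `|xh i 0| = `|xh j 0|.
  move=> lt_l2; apply/le_anti; rewrite abs_le //=; apply: abs_le.
  by under eq_bigr do rewrite distrC.
split=> // _ unit_col i j lt_l2; apply: grouping.
have col_sqr1 k : \sum_r A r k ^+ 2 = 1.
  by rewrite -[LHS]sqr_sqrtr ?unit_col ?expr1n // sumr_ge0 // => r _; exact: sqr_ge0.
have le_sqr := sum_sqr_signed_diff_le (xh i 0) (xh j 0) (col_sqr1 i) (col_sqr1 j).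
have sum_sqr_ge0 : 0 <= \sum_r (Num.sg (xh i 0) * A r i - Num.sg (xh j 0) * A r j) ^+ 2.
  by apply: sumr_ge0 => r _; exact: sqr_ge0.
apply: le_lt_trans (sum_norm_le_sqrt _) (le_lt_trans _ lt_l2).
rewrite ler_sqrt ?ler_wpM2l //.
by rewrite mulr_ge0 // (le_trans sum_sqr_ge0 le_sqr).
Qed.
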